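(* For every map $M$, any two members of $\Gamma(M)$ have the same deficiency.
   Context: A map is a triple $X=(C_X,v_X,f_X)$ where $C_X$ is a finite cubic graph (multiple edges allowed) and $v_X,f_X$ are disjoint perfect matchings whose union is a disjoint union of 4-cycles, the squares of $X$. $a_X=E(C_X)\setminus(v_X\cup f_X)$; $z_X$ is the perfect matching on $V(C_X)$ of diagonals of the squares; $Q_X=C_X\cup z_X$. $G_X$ has as vertices the cycles of $v_X\cup a_X$, as edges the squares of $X$, each square joining the cycles containing its two $v_X$-edges. The dual of $X$ is $(C_X,f_X,v_X)$ and the phial is $(Q_X\setminus v_X,z_X,f_X)$; the edge sets of the graphs of $X$, its dual and its phial are all identified with the squares of $X$. With $V_X,F_X,Z_X$ the $GF(2)$-coboundary spaces of the graphs of $X$, its dual and its phial, and $V_X^\perp$ the cycle space of $G_X$ (orthogonal complement w.r.t. $\langle A,B\rangle=|A\cap B|\bmod2$), the deficiency is $\mathrm{def}(X)=\dim V_X^\perp-\dim(F_X+Z_X)$ (one has $F_X+Z_X\subseteq V_X^\perp$). For a map $M$, $\Gamma(M)$ is the set of the six maps $(Q_M\setminus z_M,v_M,f_M)$, $(Q_M\setminus z_M,f_M,v_M)$, $(Q_M\setminus v_M,f_M,z_M)$, $(Q_M\setminus v_M,z_M,f_M)$, $(Q_M\setminus f_M,z_M,v_M)$, $(Q_M\setminus f_M,v_M,z_M)$. *)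

From Stdlib Require List.
From HB Require Import structures.
From mathcomp Require Import all_boot all_order all_algebra.
Set Implicit Arguments. Unset Strict Implicit. Unset Printing Implicit Defensive.
Import GRing.Theory.

(* A map X = (C_X, v_X, f_X) is encoded on its vertex set V (a finType) by
   three fixed-point-free involutions mv, mf, ma : V -> V: the partners of a
   vertex in the perfect matchings v_X, f_X and a_X respectively.  Since C_X
   is cubic and v_X, f_X are perfect matchings, a_X (the remaining edges) is
   a perfect matching too, so C_X = v_X + f_X + a_X (parallel edges between a
   and v or f are allowed, as in a multigraph). *)
Record map_data (V : finType) := MapData { mv : V -> V; mf : V -> V; ma : V -> V }.

Definition fpf_involution (V : finType) (s : V -> V) : Prop :=
  forall x, s (s x) = x /\ s x != x.

(* v_X and f_X disjoint perfect matchings whose union is a disjoint union of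
   4-cycles (the squares). *)
Definition is_map (V : finType) (X : map_data V) : Prop :=
  [/\ fpf_involution (mv X), fpf_involution (mf X), fpf_involution (ma X),
      (forall x, mv X x != mf X x) &
      (forall x, mf X (mv X (mf X (mv X x))) = x)].

(* z_X: the matching of diagonals of the squares: x is matched to the vertex
   opposite to it in its square, namely f (v x). *)
Definition mz (V : finType) (X : map_data V) : V -> V := mf X \o mv X.

Definition squares (V : finType) (X : map_data V) : {set {set V}} :=
  [set [set x; mv X x; mf X x; mf X (mv X x)] | x : V].

Definition pa_rel (V : finType) (p a : V -> V) : rel V :=
  [rel x y | (y == p x) || (y == a x)].
Definition cycles_of (V : finType) (p a : V -> V) : {set {set V}} :=
  [set [set y | connect (pa_rel p a) x y] | x : V].

(* Graph whose vertices are the cycles of p + a and whose edges are the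
   squares, each square s joining the cycles containing its two p-edges.
   Incidence (mod 2) of vertex c and edge s = number of ends of s at c,
   i.e. the number of p-edges of s contained in c. *)
Definition p_edges (V : finType) (p : V -> V) (s : {set V}) : {set {set V}} :=
  [set [set y; p y] | y in s].
Definition incid (V : finType) (p : V -> V) (c s : {set V}) : 'F_2 :=
  ((#|[set e in p_edges p s | e \subset c]|)%:R)%R.

(* Incidence matrix over GF(2) (rows: vertices = cycles of p + a, columns:
   edges = the squares S).  Its row space is the coboundary space. *)
Definition cobd_mx (V : finType) (p a : V -> V) (S : {set {set V}}) :
  'M['F_2]_(#|cycles_of p a|, #|S|) :=
  \matrix_(i, j) incid p (enum_val i) (enum_val j).

(* Deficiency of X:
   V_X : graph of X        (matching v_X, cycles of v_X + a_X)
   F_X : graph of the dual  (C_X, f_X, v_X): cycles of f_X + a_X, f-edges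
   Z_X : graph of the phial (Q_X \ v_X, z_X, f_X): cycles of z_X + a_X, z-edges
   All edge sets are identified with the squares of X.
   V_X^perp = orthogonal complement of V_X, i.e. kermx (V_X)^T.
   def X = dim V_X^perp - dim (F_X + Z_X). *)
Definition deficiency (V : finType) (X : map_data V) : int :=
  let S := squares X in
  let BV := cobd_mx (mv X) (ma X) S in
  let BF := cobd_mx (mf X) (ma X) S in
  let BZ := cobd_mx (mz X) (ma X) S in
  (\rank (kermx BV^T))%:Z - (\rank (BF + BZ)%MS)%:Z.

(* In each case the cubic graph is Q_M minus one of
   the matchings v_M, f_M, z_M and the two others are the new (v, f); the
   remaining (third) matching of that cubic graph is a_M in all cases. *)
Definition Gamma (V : finType) (M : map_data V) : list (map_data V) :=
  [:: MapData (mv M) (mf M) (ma M);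
      MapData (mf M) (mv M) (ma M);
      MapData (mf M) (mz M) (ma M);
      MapData (mz M) (mf M) (ma M);
      MapData (mz M) (mv M) (ma M);
      MapData (mv M) (mz M) (ma M)].

Definition in_Gamma (V : finType) (M X : map_data V) : Prop := List.In X (Gamma M).

From mathcomp Require Import all_boot all_order all_algebra.
From mathcomp Require Import zify.
From Stdlib Require Import FunctionalExtensionality.

Set Implicit Arguments.
Unset Strict Implicit.
Unset Printing Implicit Defensive.

Import GRing.Theory.
Open Scope ring_scope.

(* Write B_p for the coboundary space of the graph whose vertices are the
   cycles of p + a and whose edges are the squares, so that V_X, F_X, Z_X are
   B_v, B_f, B_z.  A vector of B_p is the coboundary x |-> g x + g (o x) of a
   potential g constant on the cycles of p + a, o being either of the two other
   matchings.  If u lies in B_f and in B_z, the sum of its two potentials is a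
   potential for u in B_v; hence B_f :&: B_z <= B_v, and
     def X = |S| - dim B_v - dim B_f - dim B_z + dim (B_v :&: B_f :&: B_z),
   which is symmetric in v, f, z.  The members of Gamma(M) are obtained from M
   by duality and phiality, which permute v, f, z and keep a and the squares. *)

Lemma F2_pchar2 : (2 \in [pchar 'F_2])%N.
Proof. exact: pchar_Fp. Qed.

Lemma F2_add_swap (x y z t : 'F_2) : x + y = z + t -> y + t = x + z.
Proof.
move=> E; rewrite -[y](addKr x) E (oppr_pchar2 F2_pchar2) -!addrA.
by rewrite (addrr_pchar2 F2_pchar2) addr0.
Qed.

Lemma card_sep_set2 (T : finType) (P : pred T) (x y : T) : x != y ->
  #|[set e in [set x; y] | P e]| = (P x + P y)%N.
Proof.
move=> xy; rewrite -sum1_card (eq_bigl (fun e => (e \in [set x; y]) && P e)) => [|e].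
  by rewrite big_mkcondr /= big_setU1 ?inE //= big_set1; case: (P x); case: (P y).
by rewrite inE.
Qed.

Lemma fpf_involutionK (V : finType) (s : V -> V) : fpf_involution s -> involutive s.
Proof. by move=> sI x; case: (sI x). Qed.

Section Cycles.
Variables (V : finType) (p a : V -> V).
Hypotheses (pK : involutive p) (aK : involutive a).

Local Notation cycle_of x := [set y | connect (pa_rel p a) x y].

Lemma pa_rel_sym : symmetric (pa_rel p a).
Proof. by move=> x y; rewrite /pa_rel /= ![y == _]eq_sym (can2_eq pK pK) (can2_eq aK aK). Qed.

Lemma mem_cycles_of c y : c \in cycles_of p a -> y \in c -> c = cycle_of y.
Proof.
case/imsetP=> x _ -> xy; apply/setP => z; rewrite !inE.
by rewrite (same_connect (sym_connect_sym pa_rel_sym) (_ : connect _ x y)) // -inE.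
Qed.

Lemma cycles_of_closed c y : c \in cycles_of p a ->
  (p y \in c) = (y \in c) /\ (a y \in c) = (y \in c).
Proof.
case/imsetP=> x _ ->; rewrite !inE.
have step z : pa_rel p a y z -> connect (pa_rel p a) x z = connect (pa_rel p a) x y.
  by move=> yz; rewrite (same_connect1r (sym_connect_sym pa_rel_sym) yz).
by rewrite !step //= /pa_rel /= eqxx ?orbT.
Qed.

Definition cycle_sum (w : 'rV['F_2]_#|cycles_of p a|) (y : V) : 'F_2 :=
  \sum_i w 0 i * (y \in enum_val i)%:R.

Lemma cycle_sum_p w y : cycle_sum w (p y) = cycle_sum w y.
Proof. by apply: eq_bigr => i _; case: (cycles_of_closed y (enum_valP i)) => ->. Qed.

Lemma cycle_sum_a w y : cycle_sum w (a y) = cycle_sum w y.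
Proof. by apply: eq_bigr => i _; case: (cycles_of_closed y (enum_valP i)) => _ ->. Qed.

Definition cycle_row (g : V -> 'F_2) : 'rV['F_2]_#|cycles_of p a| :=
  \row_i if [pick z in (enum_val i : {set V})] is Some z then g z else 0.

Lemma cycle_sum_row (g : V -> 'F_2) y :
  (forall z, g (p z) = g z) -> (forall z, g (a z) = g z) ->
  cycle_sum (cycle_row g) y = g y.
Proof.
move=> gp ga.
have g_cycle z : z \in cycle_of y -> g z = g y.
  have closed_g : closed (pa_rel p a) [pred t | g t == g y].
    by move=> s t /orP[] /eqP ->; rewrite !inE ?gp ?ga.
  by rewrite inE => /(closed_connect closed_g); rewrite !inE eqxx => /esym/eqP.
have cy : cycle_of y \in cycles_of p a by apply: imset_f.
rewrite /cycle_sum (bigD1 (enum_rank_in cy (cycle_of y))) //= big1 => [|i ne_i].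
  rewrite mxE enum_rankK_in // inE connect0 mulr1 addr0.
  by case: pickP => [z /g_cycle // | /(_ y)]; rewrite inE connect0.
case yi: (y \in enum_val i); rewrite ?mulr0 //.
case/eqP: ne_i; apply: enum_val_inj.
by rewrite enum_rankK_in // (mem_cycles_of (enum_valP i) yi).
Qed.

End Cycles.

Definition klein_pair (V : finType) (p q : V -> V) : Prop :=
  [/\ fpf_involution p, fpf_involution q, forall x, p x != q x
    & forall x, p (q x) = q (p x)].

Definition square_of (V : finType) (p q : V -> V) (x : V) : {set V} :=
  [set x; p x; q x; q (p x)].

Definition squares_of (V : finType) (p q : V -> V) : {set {set V}} :=
  [set square_of p q x | x : V].

(* The two [p]-edges of the square of [x] lie in the cycles of [x] and [o x]. *)
Definition potential (V : finType) (p o a : V -> V) (S : {set {set V}})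
    (u : 'rV['F_2]_#|S|) (g : V -> 'F_2) : Prop :=
  [/\ forall y, g (p y) = g y, forall y, g (a y) = g y
    & forall j x, enum_val j = square_of p o x -> u 0 j = g x + g (o x)].

Section Coboundary.
Variables (V : finType) (p o a : V -> V).
Hypotheses (kpo : klein_pair p o) (aK : involutive a).

Let pK : involutive p. Proof. by case: kpo => /fpf_involutionK. Qed.

Lemma incid_square c x : c \in cycles_of p a ->
  incid p c (square_of p o x) = (x \in c)%:R + (o x \in c)%:R.
Proof.
move=> cc; have [_ oI pNo po] := kpo.
have edges : p_edges p (square_of p o x) = [set [set x; p x]; [set o x; p (o x)]].
  rewrite /p_edges /square_of; apply/setP => e; apply/imsetP/set2P => [[y] | [] ->].
  - rewrite !inE -!orbA => /or4P[] /eqP -> ->; rewrite ?pK ?po ?pK;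
      [by left | by left; apply: setUC | by right | by right; apply: setUC].
  - by exists x; rewrite ?inE ?eqxx.
  - by exists (o x); rewrite ?inE ?eqxx ?orbT.
have edgesD : [set x; p x] != [set o x; p (o x)].
  apply/eqP => E; have : o x \in [set x; p x] by rewrite E set21.
  by rewrite !inE (negbTE (oI x).2) eq_sym (negbTE (pNo x)).
have sub_edge y : ([set y; p y] \subset c) = (y \in c).
  by rewrite subUset !sub1set (cycles_of_closed pK aK y cc).1 andbb.
by rewrite /incid edges card_sep_set2 // !sub_edge natrD.
Qed.

Lemma mul_cobd_mx (S : {set {set V}}) (w : 'rV_#|cycles_of p a|) j x :
  enum_val j = square_of p o x ->
  (w *m cobd_mx p a S) 0 j = cycle_sum w x + cycle_sum w (o x).
Proof.
move=> Ej; rewrite mxE -big_split; apply: eq_bigr => i _.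
by rewrite /cobd_mx mxE Ej incid_square ?enum_valP // mulrDr.
Qed.

Lemma sub_cobd_mx_potential (S : {set {set V}}) (u : 'rV_#|S|) :
  (u <= cobd_mx p a S)%MS -> exists g, potential p o a u g.
Proof.
case/submxP => w ->; exists (cycle_sum w).
by split=> [y | y | j x /mul_cobd_mx //]; [apply: cycle_sum_p | apply: cycle_sum_a].
Qed.

Lemma potential_sub_cobd_mx (S : {set {set V}}) (u : 'rV_#|S|) g :
  {subset S <= squares_of p o} -> potential p o a u g -> (u <= cobd_mx p a S)%MS.
Proof.
move=> sSsq [gp ga ug]; apply/submxP; exists (cycle_row p a g); apply/rowP => j.
have /imsetP[x _ Ej] := sSsq _ (enum_valP j).
by rewrite (ug j x Ej) (mul_cobd_mx _ Ej) !cycle_sum_row.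
Qed.

End Coboundary.

Section KleinPair.
Variables (V : finType) (p q : V -> V).

Lemma square_ofC : (forall x, p (q x) = q (p x)) -> square_of p q =1 square_of q p.
Proof. by move=> pq x; rewrite /square_of pq (setUAC [set x]). Qed.

Lemma square_of_comp : involutive q -> square_of (q \o p) q =1 square_of p q.
Proof.
by move=> qK x; apply/setP => y; rewrite !inE /= qK orbAC (orbAC (y == x)) orbAC.
Qed.

Hypothesis kpq : klein_pair p q.

Lemma klein_pairC : klein_pair q p.
Proof. by case: kpq => pI qI pNq pq; split=> // x; rewrite ?pq // eq_sym. Qed.

Lemma klein_pair_comp : klein_pair (q \o p) q.
Proof.
have [pI qI pNq pq] := kpq; have [pK qK] := (fpf_involutionK pI, fpf_involutionK qI).
split=> // x /=.
- by rewrite pq qK pK (can2_eq qK qK) pNq.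
- by rewrite (inj_eq (can_inj qK)) (pI x).2.
- by rewrite pq qK.
Qed.

End KleinPair.

Lemma cobd_mx_cap_sub (V : finType) (p q a : V -> V) :
    klein_pair p q -> involutive a ->
  (cobd_mx q a (squares_of p q) :&: cobd_mx (q \o p) a (squares_of p q)
    <= cobd_mx p a (squares_of p q))%MS.
Proof.
move=> kpq aK; have [pI qI _ pq] := kpq; have pK := fpf_involutionK pI.
apply/row_subP => i; set u := row i _.
have [g [gq ga ug]] : exists g, potential q p a u g.
  exact/(sub_cobd_mx_potential (klein_pairC kpq) aK)/(submx_trans (row_sub i _))/capmxSl.
have [h [hr ha uh]] : exists h, potential (q \o p) q a u h.
  exact/(sub_cobd_mx_potential (klein_pair_comp kpq) aK)/(submx_trans (row_sub i _))/capmxSr.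
have u_g j x : enum_val j = square_of p q x -> u 0 j = g x + g (p x).
  by move=> Ej; apply: ug; rewrite Ej square_ofC.
have u_h j x : enum_val j = square_of p q x -> u 0 j = h x + h (q x).
  by move=> Ej; apply: uh; rewrite Ej (square_of_comp p (fpf_involutionK qI)).
apply: (potential_sub_cobd_mx kpq aK (g := fun y => g y + h y)) => //.
split=> [y | y | j x Ej] /=.
- have sq_y : square_of p q y \in squares_of p q by apply: imset_f.
  have Ey := enum_rankK_in sq_y sq_y.
  have := u_h _ _ Ey; rewrite (u_g _ _ Ey) => /F2_add_swap <-.
  by rewrite -[h (p y)]hr /= pK.
- by rewrite ga ha.
- by rewrite gq (u_h _ _ Ej) addrACA (addrr_pchar2 F2_pchar2) add0r.
Qed.

Lemma is_map_klein (V : finType) (X : map_data V) : is_map X -> klein_pair (mv X) (mf X).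
Proof.
case=> vI fI _ vNf fvfv; split=> // x.
by have := fvfv (mv X (mf X x)); rewrite (fpf_involutionK vI) (fpf_involutionK fI) => /esym.
Qed.

Lemma is_map_MapData (V : finType) (p q a : V -> V) :
  klein_pair p q -> fpf_involution a -> is_map (MapData p q a).
Proof.
case=> pI qI pNq pq aI; split=> // x /=.
by rewrite pq (fpf_involutionK pI) (fpf_involutionK qI).
Qed.

Definition map_dual (V : finType) (X : map_data V) : map_data V :=
  MapData (mf X) (mv X) (ma X).

Definition map_phial (V : finType) (X : map_data V) : map_data V :=
  MapData (mz X) (mf X) (ma X).

Definition triple_deficiency (V : finType) (p q r a : V -> V) (S : {set {set V}}) : int :=
  #|S|%:Z - (\rank (cobd_mx p a S) + \rank (cobd_mx q a S) + \rank (cobd_mx r a S))%:Z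
  + (\rank (cobd_mx p a S :&: cobd_mx q a S :&: cobd_mx r a S))%:Z.

Lemma triple_deficiency_swap12 (V : finType) (p q r a : V -> V) S :
  triple_deficiency p q r a S = triple_deficiency q p r a S.
Proof.
by rewrite /triple_deficiency (addnC (\rank (cobd_mx p a S))) (capmxC (cobd_mx p a S)).
Qed.

Lemma triple_deficiency_swap13 (V : finType) (p q r a : V -> V) S :
  triple_deficiency p q r a S = triple_deficiency r q p a S.
Proof.
rewrite /triple_deficiency [(_ :&: cobd_mx p a S)%MS]capmxC (capmxC (cobd_mx r a S)) capmxA.
lia.
Qed.

Section MapOperations.
Variables (V : finType) (X : map_data V).
Hypothesis mapX : is_map X.

Let kX : klein_pair (mv X) (mf X). Proof. exact: is_map_klein. Qed.
Let aI : fpf_involution (ma X). Proof. by case: mapX. Qed.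

Lemma is_map_dual : is_map (map_dual X).
Proof. exact/is_map_MapData/aI/klein_pairC. Qed.

Lemma is_map_phial : is_map (map_phial X).
Proof. exact/is_map_MapData/aI/klein_pair_comp. Qed.

Lemma mz_dual : mz (map_dual X) = mz X.
Proof. by apply: functional_extensionality => x; case: kX => _ _ _ vf; rewrite /mz /= vf. Qed.

Lemma mz_phial : mz (map_phial X) = mv X.
Proof.
apply: functional_extensionality => x; case: kX => _ /fpf_involutionK fK _ _.
by rewrite /mz /= fK.
Qed.

Lemma squares_dual : squares (map_dual X) = squares X.
Proof.
case: kX => _ _ _ vf; apply: eq_imset => x.
exact: (square_ofC (fun y => esym (vf y))).
Qed.

Lemma squares_phial : squares (map_phial X) = squares X.
Proof.
case: kX => _ /fpf_involutionK fK _ _; apply: eq_imset => x.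
exact: (square_of_comp (mv X) fK).
Qed.

Lemma deficiencyE :
  deficiency X = triple_deficiency (mv X) (mf X) (mz X) (ma X) (squares X).
Proof.
rewrite /deficiency /triple_deficiency mxrank_ker mxrank_tr.
set Bv := cobd_mx (mv X) _ _; set Bf := cobd_mx (mf X) _ _; set Bz := cobd_mx (mz X) _ _.
have sub : (Bf :&: Bz <= Bv)%MS := cobd_mx_cap_sub kX (fpf_involutionK aI).
rewrite -capmxA (capmx_idPr sub).
have := mxrank_sum_cap Bf Bz; have := rank_leq_col Bv; lia.
Qed.

End MapOperations.

Lemma deficiency_dual (V : finType) (X : map_data V) :
  is_map X -> deficiency (map_dual X) = deficiency X.
Proof.
move=> mapX; rewrite (deficiencyE (is_map_dual mapX)) (deficiencyE mapX).
rewrite mz_dual // squares_dual //.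
exact: triple_deficiency_swap12.
Qed.

Lemma deficiency_phial (V : finType) (X : map_data V) :
  is_map X -> deficiency (map_phial X) = deficiency X.
Proof.
move=> mapX; rewrite (deficiencyE (is_map_phial mapX)) (deficiencyE mapX).
rewrite mz_phial // squares_phial //.
exact: triple_deficiency_swap13.
Qed.

Theorem lemma2p4 (V : finType) (M : map_data V) :
  is_map M ->
  forall X Y : map_data V, in_Gamma M X -> in_Gamma M Y ->
  deficiency X = deficiency Y.
Proof.
move=> mapM; suff def_Gamma X : in_Gamma M X -> deficiency X = deficiency M.
  by move=> X Y /def_Gamma -> /def_Gamma ->.
have mapD := is_map_dual mapM; have mapP := is_map_phial mapM.
have defD := deficiency_dual mapM; have defP := deficiency_phial mapM.
(* Gamma M lists M, dual M, dual (phial M), phial M, phial (dual M) and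
   dual (phial (dual M)), the last two up to mz (dual M) = mz M. *)
case=> [<- | [<- | [<- | [<- | [<- | [<- | []]]]]]].
- by [].
- exact: defD.
- exact: etrans (deficiency_dual mapP) defP.
- exact: defP.
- rewrite -(mz_dual mapM); exact: etrans (deficiency_phial mapD) defD.
- rewrite -(mz_dual mapM).
  exact: etrans (deficiency_dual (is_map_phial mapD)) (etrans (deficiency_phial mapD) defD).
Qed.
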